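(* Let $s,k$ be positive integers with $s>2\cdot10^6$, and let $n=\lceil 3e(s+1)k\rceil$. Let $\mathcal F\subset\binom{[n]}{k}$ be a nonempty shifted family and let $$\beta:=\min_{F\in\mathcal F}\ \max_{\ell\in[n]}\frac{|F\cap[\ell]|}{\ell},$$ i.e. $\beta$ is the largest rational number such that for every $F\in\mathcal F$ there is $\ell$ with $|F\cap[\ell]|\ge\beta\ell$. If $\beta>\frac{4}{3(s+1)}$, then $|\mathcal F|<\binom{n}{k}-\binom{n-s}{k}$.
   Context: $[n]=\{1,\ldots,n\}$; $\binom{X}{k}$ is the family of all $k$-subsets of $X$. A family $\mathcal F\subset\binom{[n]}{k}$ is shifted if whenever $A\in\mathcal F$ and $B$ is obtained from $A$ by replacing some elements with smaller elements, then $B\in\mathcal F$. Note $\binom{n}{k}-\binom{n-s}{k}$ is the number of $k$-subsets of $[n]$ meeting $[s]$. *)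

From Stdlib Require Import Reals.
From mathcomp Require Import all_boot all_order all_algebra.
Set Implicit Arguments. Unset Strict Implicit. Unset Printing Implicit Defensive.
Import Order.TTheory GRing.Theory Num.Theory.

(* Convention: the ground set [n] = {1,...,n} is represented by 'I_n,
   the ordinal i standing for the integer i+1.  Hence [l] = {1,..,l}
   corresponds to [set i : 'I_n | i < l]. *)

Definition replaced_by_smaller (n : nat) (A B : {set 'I_n}) : Prop :=
  exists f : 'I_n -> 'I_n,
    [/\ {in A &, injective f}, (forall a, a \in A -> f a <= a) & B = f @: A].

Definition shifted (n : nat) (F : {set {set 'I_n}}) : Prop :=
  forall A B, A \in F -> replaced_by_smaller A B -> B \in F.

(* |A ∩ [l+1]| / (l+1), for l : 'I_n (so l+1 ranges over [n]). *)
Local Open Scope ring_scope.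

Definition ratio (n : nat) (A : {set 'I_n}) (l : 'I_n) : rat :=
  (#|[set i in A | (i <= l)%N]|)%:R / (l.+1)%:R.

(* max over l in [n] of |A ∩ [l]| / l  (all ratios are >= 0). *)
Definition maxratio (n : nat) (A : {set 'I_n}) : rat :=
  \big[Num.max/0]_(l < n) ratio A l.

(* beta(F) = min over A in F of maxratio A; all values are <= 1, so the
   default value 1 is irrelevant for nonempty F. *)
Definition beta (n : nat) (F : {set {set 'I_n}}) : rat :=
  \big[Num.min/1]_(A in F) maxratio A.

From Pilot Require Import Defs.
From Stdlib Require Import Reals Lra.
From mathcomp Require Import all_boot all_order all_algebra zify ring lra.
Set Implicit Arguments. Unset Strict Implicit. Unset Printing Implicit Defensive.
Import Order.TTheory GRing.Theory Num.Theory.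

(* Let p := cutoff (s+1) 1, roughly 3s/4, and split F according to whether a set
   meets the first p points.  At most C(n,k) - C(n-p,k) sets meet them.  For a
   set A avoiding them, the hypothesis on beta gives a prefix [l] containing
   j > 4l/(3(s+1)) points of A; these lie in the window (p, cutoff (s+1) j], of
   length about 3(s+1)(j-1)/4.  So the sets avoiding [p] number at most
   sum_j C(w_j, j) C(n-p-j, k-j), with w_j the window lengths.  As n > 6(s+1)k,
   the terms with j >= 2 decrease geometrically (the window for j = 1 is empty)
   and the sum stays below D C(n-p-1, k-1) (1 - Dk/(n-s)), D = s - p, which
   bounds from below the number C(n-p,k) - C(n-s,k) of k-sets avoiding [p] but
   meeting [s]. *)

Section RealBound.
Local Open Scope R_scope.

Lemma lt_6sk_of_3e_le (s k n : nat) : (0 < k)%N ->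
  Rle (Rmult (Rmult (Rmult (INR 3) (exp (INR 1))) (INR (s + 1))) (INR k)) (INR n) ->
  (6 * (s + 1) * k < n)%N.
Proof.
move=> k_gt0 n_ge; apply/ssrnat.ltP; apply: INR_lt; rewrite !mult_INR.
have e_gt2 : 2 < exp 1 by have := exp_ineq1 1 R1_neq_R0; Lra.lra.
have k_pos : 0 < INR k by apply: lt_0_INR; apply/ssrnat.ltP.
have s_pos : 0 < INR (s + 1) by apply: lt_0_INR; apply/ssrnat.ltP; rewrite addn1.
have : 6 * INR (s + 1) * INR k < 3 * exp 1 * INR (s + 1) * INR k.
  by do 2 apply: Rmult_lt_compat_r => //; Lra.lra.
have -> : INR 6 = 6 by rewrite /=; Lra.lra.
move: n_ge; have -> : INR 3 = 3 by rewrite /=; Lra.lra.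
rewrite /=; Lra.lra.
Qed.

End RealBound.

Lemma bernoulli_expn a N : a ^ N.+1 + N.+1 * a ^ N <= a.+1 ^ N.+1.
Proof.
elim: N => [|N IH]; first by rewrite addn1.
rewrite [a.+1 ^ _]expnS; apply: leq_trans (leq_mul (leqnn a.+1) IH) => {IH}.
rewrite !expnS; nia.
Qed.

(* (1 + 1/m)^(m+1) is nonincreasing, in cross-multiplied form: expand
   (m+1)^(2m+2) = (m(m+2) + 1)^(m+1) by Bernoulli. *)
Lemma expn_succ_ratio_decr m : m.+2 ^ m.+2 * m ^ m.+1 <= m.+1 ^ m.+1 * m.+1 ^ m.+2.
Proof.
have := bernoulli_expn (m * m.+2) m.
have -> : (m * m.+2).+1 = m.+1 * m.+1 by ring.
rewrite !expnMn -expnD.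
have -> : m.+1 ^ m.+1 * m.+1 ^ m.+2 = m.+1 * m.+1 ^ (m.+1 + m.+1).
  by rewrite -expnS -expnD addnS.
rewrite [m ^ m.+1]expnS [m.+2 ^ m.+2]expnS [m.+2 ^ m.+1]expnS.
set P := m ^ m * m.+2 ^ m; set C := m.+1 ^ _.
have -> : m.+2 * (m.+2 * m.+2 ^ m) * (m * m ^ m) = m.+2 * m.+2 * m * P by rewrite /P; ring.
have -> : m * m ^ m * (m.+2 * m.+2 ^ m) + m.+1 * P = (m * m.+2 + m.+1) * P by rewrite /P; ring.
nia.
Qed.

Lemma expn_succ_le4 m : 0 < m -> m.+1 ^ m.+1 <= 4 * m ^ m.+1.
Proof.
elim: m => // -[_ _ | m IH _]; first by [].
have P_gt0 : 0 < m.+1 ^ m.+2 by rewrite expn_gt0.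
rewrite -(leq_pmul2r P_gt0); apply: leq_trans (expn_succ_ratio_decr m.+1) _.
by rewrite mulnAC leq_mul2r IH ?orbT.
Qed.

Lemma bin_shift_le M k j : k <= M -> j < k ->
  M * 'C(M - j.+1, k - j.+1) <= k * 'C(M - j, k - j).
Proof.
move=> kM jk; have := mul_bin_diag (M - j) (k - j.+1).
have -> : (M - j).-1 = M - j.+1 by lia.
have -> : (k - j.+1).+1 = k - j by lia.
set C1 := 'C(_, _); set C0 := 'C(_, _) => eqC.
have Mj_gt0 : 0 < M - j by lia.
rewrite -(leq_pmul2l Mj_gt0) mulnCA eqC !mulnA leq_mul2r.
by apply/orP; right; nia.
Qed.

Lemma ffact_le_expn w j : w ^_ j <= w ^ j.
Proof.
have -> : w ^ j = \prod_(i < j) w by rewrite prod_nat_const card_ord.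
by rewrite ffact_prod; apply: leq_prod => i _; exact: leq_subr.
Qed.

Lemma ltr_frac_nat {R : numFieldType} (a b c d : nat) : (0 < b)%N -> (0 < d)%N ->
  (a%:R / b%:R < c%:R / d%:R :> R)%R = (a * d < c * b)%N.
Proof.
move=> b_gt0 d_gt0.
by rewrite ltr_pdivrMr ?ltr0n // mulrAC ltr_pdivlMr ?ltr0n // -!natrM ltr_nat.
Qed.

Section Estimates.
Local Open Scope ring_scope.
Variable R : realFieldType.

Lemma bin_le_expn_fact (w j : nat) : 'C(w, j)%:R <= w%:R ^+ j / j`!%:R :> R.
Proof.
rewrite ler_pdivlMr ?ltr0n ?fact_gt0 // -natrX -natrM ler_nat bin_ffact.
exact: ffact_le_expn.
Qed.

Lemma bin_shift_le_geom (M k j : nat) : (k <= M)%N -> (j < k)%N ->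
  'C(M - j.+1, k - j.+1)%:R <= 'C(M.-1, k.-1)%:R * (k%:R / M%:R) ^+ j :> R.
Proof.
move=> kM; elim: j => [|j IH] jk; first by rewrite !subn1 expr0 mulr1.
have M_gt0 : (0 < M)%N by lia.
have step : 'C(M - j.+2, k - j.+2)%:R <= k%:R / M%:R * 'C(M - j.+1, k - j.+1)%:R :> R.
  rewrite mulrAC ler_pdivlMr ?ltr0n // -!natrM ler_nat mulnC.
  exact: bin_shift_le.
apply: le_trans step _.
by rewrite exprS mulrCA ler_wpM2l ?divr_ge0 // IH // ltnW.
Qed.

Lemma bin_pred_ge (a b : nat) (z : R) : (0 < a)%N -> b%:R / a%:R <= z ->
  (1 - z) * 'C(a, b)%:R <= 'C(a.-1, b)%:R.
Proof.
move=> a_gt0 le_z; have [ba|ab] := leqP b a; last by rewrite bin_small // mulr0.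
have a_pos : 0 < a%:R :> R by rewrite ltr0n.
have -> : 'C(a.-1, b)%:R = (1 - b%:R / a%:R) * 'C(a, b)%:R :> R.
  apply: (mulfI (lt0r_neq0 a_pos)); rewrite -natrM mul_bin_down natrM natrB //.
  by field; exact: lt0r_neq0.
by rewrite ler_wpM2r // lerD2l lerN2.
Qed.

Section Diagonal.
Variables (M k D : nat) (z : R).
Hypotheses (k_gt0 : (0 < k)%N) (kDM : (k + D <= M)%N).
Hypotheses (z_ge : k%:R / (M - D)%:R <= z) (z_le1 : z <= 1).

Let z_ge0 : 0 <= z. Proof. exact: le_trans (divr_ge0 _ _) z_ge. Qed.

Lemma bin_pred_shift_ge e : (e <= D)%N ->
  'C(M.-1, k.-1)%:R * (1 - e%:R * z) <= 'C(M.-1 - e, k.-1)%:R.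
Proof.
elim: e => [|e IH] eD; first by rewrite mul0r subr0 mulr1 subn0.
have MDpos : 0 < (M - D)%:R :> R by rewrite ltr0n; lia.
have ratio_le : k.-1%:R / (M.-1 - e)%:R <= z.
  apply: le_trans z_ge; rewrite ler_pdivrMr ?ltr0n; last by lia.
  by rewrite mulrAC ler_pdivlMr // -!natrM ler_nat; nia.
have a_gt0 : (0 < M.-1 - e)%N by lia.
rewrite subnS; apply: le_trans _ (bin_pred_ge a_gt0 ratio_le).
have := IH (ltnW eD); set C := 'C(M.-1, k.-1)%:R; set C' := 'C(_, _)%:R => le_C.
have C_ge0 : 0 <= C by rewrite ler0n.
have : (1 - z) * (C * (1 - e%:R * z)) <= (1 - z) * C' by rewrite ler_wpM2l // subr_ge0.
have : 0 <= C * (e%:R * (z * z)) by rewrite !mulr_ge0.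
rewrite -natr1; nra.
Qed.

Lemma bin_diff_ge e : (e <= D)%N ->
  e%:R * 'C(M.-1, k.-1)%:R * (1 - e%:R * z) <= 'C(M, k)%:R - 'C(M - e, k)%:R.
Proof.
elim: e => [|e IH] eD; first by rewrite !mul0r subn0 subrr.
have pascal : 'C(M - e, k) = 'C(M - e.+1, k) + 'C(M.-1 - e, k.-1).
  have -> : (M - e = (M - e.+1).+1)%N by lia.
  have -> : (M.-1 - e = M - e.+1)%N by lia.
  by case: k k_gt0 => // k' _; rewrite binS.
have := IH (ltnW eD); rewrite pascal natrD.
have := bin_pred_shift_ge (ltnW eD).
set C := 'C(M.-1, k.-1)%:R.
have : 0 <= C * ((e%:R + 1) * z) by rewrite !mulr_ge0 ?addr_ge0.
rewrite -natr1; nra.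
Qed.

End Diagonal.

Definition tail_term (c x : R) (j : nat) : R := (j.-1%:R * c) ^+ j / j`!%:R * x ^+ j.-1.

Lemma tail_term_ge0 (c x : R) j : 0 <= c -> 0 <= x -> 0 <= tail_term c x j.
Proof. by move=> c_ge0 x_ge0; rewrite /tail_term !mulr_ge0 ?exprn_ge0 ?mulr_ge0 ?invr_ge0. Qed.

Lemma tail_term_succ_le (c x : R) m : 0 <= c -> 0 <= x -> (0 < m)%N ->
  tail_term c x m.+2 <= 4 * c * x * tail_term c x m.+1.
Proof.
move=> c_ge0 x_ge0 m_gt0; rewrite /tail_term /=.
set Q := c ^+ m.+1 * x ^+ m / (m.+1)`!%:R.
have Q_ge0 : 0 <= Q by rewrite !mulr_ge0 ?exprn_ge0 ?invr_ge0.
have m2_pos : 0 < m.+2%:R :> R by rewrite ltr0n.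
have -> : (m.+1%:R * c) ^+ m.+2 / (m.+2)`!%:R * x ^+ m.+1
    = m.+1%:R ^+ m.+2 / m.+2%:R * (c * x * Q).
  rewrite /Q factS natrM !exprMn !exprS; field.
  by rewrite pnatr_eq0 -lt0n fact_gt0 /= -(natrD R 2) pnatr_eq0.
rewrite [leRHS](_ : _ = 4 * m%:R ^+ m.+1 * (c * x * Q)); last first.
  by rewrite /Q !exprMn; field; rewrite pnatr_eq0 -lt0n fact_gt0.
apply: ler_wpM2r; first exact: mulr_ge0 (mulr_ge0 c_ge0 x_ge0) Q_ge0.
rewrite ler_pdivrMr // -!natrX -!natrM ler_nat.
by rewrite expnS mulnC leq_mul ?expn_succ_le4.
Qed.

Lemma tail_term2 (c x : R) : tail_term c x 2 = c ^+ 2 * x / 2.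
Proof. by rewrite /tail_term /= mul1r expr1 mulrAC. Qed.

Lemma bin_prod_le_tail_term (w M k j : nat) (c x : R) : (2 <= j <= k)%N -> (k <= M)%N ->
  k%:R / M%:R <= x -> 0 <= c -> w%:R <= j.-1%:R * c ->
  ('C(w, j) * 'C(M - j, k - j))%:R <= 'C(M.-1, k.-1)%:R * tail_term c x j.
Proof.
case/andP=> j_ge2 jk kM x_ge c_ge0 w_le.
have x_ge0 : 0 <= x by exact: le_trans (divr_ge0 _ _) x_ge.
rewrite natrM /tail_term mulrCA; apply: ler_pM; rewrite ?ler0n //.
  apply: le_trans (bin_le_expn_fact w j) _; rewrite ler_wpM2r ?invr_ge0 ?ler0n //.
  by apply: lerXn2r; rewrite ?nnegrE ?ler0n ?mulr_ge0 ?ler0n.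
have := @bin_shift_le_geom M k j.-1 kM; rewrite prednK; last by lia.
move=> /(_ ltac:(lia)) /le_trans; apply; rewrite ler_wpM2l ?ler0n //.
by apply: lerXn2r; rewrite ?nnegrE ?divr_ge0 ?ler0n.
Qed.

Lemma geom_sum_le (G : nat -> R) (r : R) (m K : nat) :
  (forall i, (m <= i)%N -> G i.+1 <= r * G i) -> (m <= K)%N ->
  (1 - r) * \sum_(m <= i < K) G i <= G m - G K.
Proof.
move=> G_succ; elim: K => [|K IH] mK.
  by move: mK; rewrite leqn0 => /eqP->; rewrite big_geq // mulr0 subrr.
case: (ltngtP m K.+1) mK => // [mK _ | <- _]; last by rewrite big_geq // mulr0 subrr.
rewrite big_nat_recr //= mulrDr.
by have := G_succ K mK; have := IH mK; lra.
Qed.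

Lemma tail_sum_le (w : nat -> nat) (M k : nat) (c x : R) : (0 < k <= M)%N ->
  k%:R / M%:R <= x -> 0 <= c -> 4 * c * x <= 1 ->
  (forall j, (2 <= j)%N -> (w j)%:R <= j.-1%:R * c) ->
  (1 - 4 * c * x) * \sum_(2 <= j < k.+1) ('C(w j, j) * 'C(M - j, k - j))%:R
    <= 'C(M.-1, k.-1)%:R * (c ^+ 2 * x / 2).
Proof.
case/andP=> k_gt0 kM x_ge c_ge0 r_le1 w_le.
have x_ge0 : 0 <= x by exact: le_trans (divr_ge0 _ _) x_ge.
set C := 'C(M.-1, k.-1)%:R; have C_ge0 : 0 <= C by rewrite ler0n.
have terms_le : \sum_(2 <= j < k.+1) ('C(w j, j) * 'C(M - j, k - j))%:R
    <= C * \sum_(2 <= j < k.+1) tail_term c x j.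
  rewrite mulr_sumr; apply: ler_sum_nat => j /andP[j_ge2 jk].
  by apply: bin_prod_le_tail_term; rewrite ?j_ge2 ?w_le.
have geom : (1 - 4 * c * x) * \sum_(2 <= j < k.+1) tail_term c x j
    <= tail_term c x 2 - tail_term c x k.+1.
  apply: geom_sum_le => // -[|[|i]] // _; exact: tail_term_succ_le.
have last_ge0 := tail_term_ge0 k.+1 c_ge0 x_ge0.
rewrite -tail_term2.
apply: le_trans (_ : _ <= (1 - 4 * c * x) * (C * \sum_(2 <= j < k.+1) tail_term c x j)) _.
  by rewrite ler_wpM2l ?subr_ge0.
by rewrite mulrCA ler_wpM2l //; lra.
Qed.

Lemma tail_lt_gain (S c x D z : R) : 1000 <= S -> 4 * c = 3 * S + 4 ->
  0 <= x -> 5 * S * x <= 1 -> 0 <= z -> 5 * S * z <= 1 -> S - 3 <= 4 * D -> 4 * D <= S ->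
  c ^+ 2 * x / 2 < (1 - 4 * c * x) * (D * (1 - D * z)).
Proof.
move=> S_ge ec x_ge0 Sx_le z_ge0 Sz_le D_ge D_le.
(* c x <= 0.151 and D z <= 0.05, while c is only about 3 D. *)
have c_ge0 : 0 <= c by lra.
have S_pos : 0 < S by lra.
have cx_le : c * x <= 151 / 1000.
  rewrite -(ler_pM2r S_pos).
  have : c * (5 * S * x) <= c * 1 by rewrite ler_wpM2l.
  nra.
have Dz_le : D * z <= 1 / 20.
  rewrite -(ler_pM2r S_pos).
  have : D * (5 * S * z) <= D * 1 by rewrite ler_wpM2l; lra.
  nra.
have cx_ge0 : 0 <= c * x by rewrite mulr_ge0.
have : 396 / 1000 * (D * (95 / 100)) <= (1 - 4 * (c * x)) * (D * (1 - D * z)).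
  by apply: ler_pM; try lra; apply: ler_pM; lra.
have : c * (c * x) <= c * (151 / 1000) by rewrite ler_wpM2l.
rewrite expr2 !mulrA; lra.
Qed.

Lemma tail_sum_lt_bin_diff (w : nat -> nat) (M D k : nat) (c x z : R) :
  (0 < k)%N -> (k + D <= M)%N -> k%:R / M%:R <= x -> k%:R / (M - D)%:R <= z -> z <= 1 ->
  0 <= c -> 4 * c * x < 1 -> (forall j, (2 <= j)%N -> (w j)%:R <= j.-1%:R * c) ->
  c ^+ 2 * x / 2 < (1 - 4 * c * x) * (D%:R * (1 - D%:R * z)) ->
  \sum_(2 <= j < k.+1) ('C(w j, j) * 'C(M - j, k - j))%:R < 'C(M, k)%:R - 'C(M - D, k)%:R :> R.
Proof.
move=> k_gt0 kDM x_ge z_ge z_le1 c_ge0 r_lt1 w_le gain.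
have kM : (0 < k <= M)%N by rewrite k_gt0; lia.
have upper := tail_sum_le kM x_ge c_ge0 (ltW r_lt1) w_le.
have lower := bin_diff_ge k_gt0 kDM z_ge z_le1 (leqnn D).
have r_pos : 0 < 1 - 4 * c * x by rewrite subr_gt0.
have C_pos : 0 < 'C(M.-1, k.-1)%:R :> R by rewrite ltr0n bin_gt0; lia.
rewrite -(ltr_pM2l r_pos); apply: le_lt_trans upper _.
apply: lt_le_trans (_ : _ < 'C(M.-1, k.-1)%:R * ((1 - 4 * c * x) * (D%:R * (1 - D%:R * z)))) _.
  by rewrite (ltr_pM2l C_pos).
by rewrite mulrCA; apply: (ler_wpM2l (ltW r_pos)); rewrite mulrCA mulrA.
Qed.

End Estimates.

Section SumBound.
Local Open Scope ring_scope.

Lemma sum_bin_prod_lt (S M D k : nat) (w : nat -> nat) : (1000 <= S)%N -> (0 < k)%N ->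
  (5 * S * k <= M - D)%N -> (S <= 4 * D + 3)%N -> (4 * D <= S)%N ->
  (forall j, 4 * w j <= 3 * S * j.-1 + 3)%N ->
  (\sum_(1 <= j < k.+1) 'C(w j, j) * 'C(M - j, k - j) < 'C(M, k) - 'C(M - D, k))%N.
Proof.
move=> S_ge k_gt0 SkMD S_le D_le w_le.
have kMD : (k <= M - D)%N by apply: leq_trans SkMD; rewrite leq_pmull // muln_gt0; lia.
have kDM : (k + D <= M)%N by lia.
have SkM : (5 * S * k <= M)%N by lia.
have w1 : w 1%N = 0%N by have := w_le 1%N; lia.
have w_le' j : (2 <= j)%N -> (4 * w j <= j.-1 * (3 * S + 4))%N.
  move=> j_ge2; have j1_ge1 : (1 <= j.-1)%N by lia.
  by apply: leq_trans (w_le j) _; rewrite mulnC mulnDr; lia.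
rewrite big_ltn // w1 bin0n mul0n add0n.
rewrite -(ltr_nat rat) natr_sum natrB ?leq_bin2l ?leq_subr //.
have [c c4] : {c : rat | 4 * c = 3 * S%:R + 4} by exists ((3 * S%:R + 4) / 4); field.
have [x x_def] : {x : rat | x = k%:R / M%:R} by exists (k%:R / M%:R).
have [z z_def] : {z : rat | z = k%:R / (M - D)%:R} by exists (k%:R / (M - D)%:R).
have M_pos : 0 < M%:R :> rat by rewrite ltr0n (leq_trans k_gt0) // (leq_trans kMD) ?leq_subr.
have MD_pos : 0 < (M - D)%:R :> rat by rewrite ltr0n (leq_trans k_gt0).
have S_ge' : 1000 <= S%:R :> rat by rewrite ler_nat.
have x_pos : 0 < x by rewrite x_def; apply: divr_gt0 _ M_pos; rewrite ltr0n.
have Sx_le : 5 * S%:R * x <= 1.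
  by rewrite x_def mulrA (ler_pdivrMr _ _ M_pos) mul1r -!natrM ler_nat.
have Sz_le : 5 * S%:R * z <= 1.
  by rewrite z_def mulrA (ler_pdivrMr _ _ MD_pos) mul1r -!natrM ler_nat.
have r_lt1 : 4 * c * x < 1.
  rewrite c4; apply: lt_le_trans _ Sx_le; rewrite (ltr_pM2r x_pos); lra.
have w_le_c j : (2 <= j)%N -> (w j)%:R <= j.-1%:R * c.
  have four_pos : 0 < 4 :> rat by rewrite ltr0n.
  move=> j_ge2; rewrite -(ler_pM2l four_pos) mulrCA c4.
  by rewrite -!natrM -natrD -natrM ler_nat w_le'.
have z_ge0 : 0 <= z by rewrite z_def divr_ge0 ?ler0n.
apply: (tail_sum_lt_bin_diff (z := z) k_gt0 kDM _ _ _ _ r_lt1 w_le_c).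
- by rewrite x_def.
- by rewrite z_def.
- by rewrite z_def (ler_pdivrMr _ _ MD_pos) mul1r ler_nat.
- by lra.
apply: tail_lt_gain S_ge' c4 (ltW x_pos) Sx_le z_ge0 Sz_le _ _.
  by rewrite lerBlDr -natrM -natrD ler_nat.
by rewrite -natrM ler_nat.
Qed.

End SumBound.

Lemma card_bigcup_le (T : finType) (I : Type) (r : seq I) (P : pred I) (F : I -> {set T}) :
  #|\bigcup_(i <- r | P i) F i| <= \sum_(i <- r | P i) #|F i|.
Proof.
elim/big_rec2: _ => [|i B m _ IH]; first by rewrite cards0.
by apply: leq_trans (leq_card_setU _ _) _; rewrite leq_add2l.
Qed.

Lemma exists_subset_card (T : finType) (A : {set T}) j : j <= #|A| ->
  exists2 B : {set T}, B \subset A & #|B| = j.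
Proof.
move=> jA; have : 0 < #|[set B : {set T} | B \subset A & #|B| == j]|.
  by rewrite cards_draws bin_gt0.
by case/card_gt0P=> B; rewrite inE => /andP[BA /eqP BJ]; exists B.
Qed.

Lemma cards_draws_hit_le (T : finType) (U W : {set T}) (k j : nat) : W \subset U ->
  #|[set A : {set T} | [&& A \subset U, #|A| == k & j <= #|A :&: W|]]|
    <= 'C(#|W|, j) * 'C(#|U| - j, k - j).
Proof.
move=> WU.
pose over (B : {set T}) := [set A : {set T} | [&& A \subset U, #|A| == k & B \subset A]].
have cover : [set A : {set T} | [&& A \subset U, #|A| == k & j <= #|A :&: W|]]
    \subset \bigcup_(B in [set B : {set T} | B \subset W & #|B| == j]) over B.
  apply/subsetP => A; rewrite inE => /and3P[AU Ak jAW].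
  have [B BAW Bj] := exists_subset_card jAW; apply/bigcupP; exists B.
    by rewrite inE Bj eqxx andbT (subset_trans BAW) ?subsetIr.
  by rewrite inE AU Ak (subset_trans BAW) ?subsetIl.
apply: leq_trans (subset_leq_card cover) _; apply: leq_trans (card_bigcup_le _ _ _) _.
rewrite -(cards_draws W j) -sum_nat_const; apply: leq_sum => B; rewrite inE.
case/andP=> BW /eqP Bj; have BU := subset_trans BW WU.
have diffB_inj : {in over B &, injective (fun A => A :\: B)}.
  move=> A1 A2; rewrite !inE => /and3P[_ _ BA1] /and3P[_ _ BA2] eqD.
  by rewrite -(setID A1 B) -(setID A2 B) (setIidPr BA1) (setIidPr BA2) eqD.
have -> : 'C(#|U| - j, k - j) = #|[set C : {set T} | C \subset U :\: B & #|C| == k - j]|.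
  by rewrite cards_draws cardsD (setIidPr BU) Bj.
rewrite -(card_in_imset diffB_inj); apply/subset_leq_card/subsetP => C /imsetP[A].
by rewrite !inE => /and3P[AU /eqP Ak BA] ->; rewrite setSD //= cardsD (setIidPr BA) Ak Bj.
Qed.

Lemma card_not_subset_le (T : finType) (U : {set T}) (F : {set {set T}}) k :
  (forall A, A \in F -> #|A| = k) -> #|F :\: powerset U| <= 'C(#|T|, k) - 'C(#|U|, k).
Proof.
move=> sizeF; rewrite -card_draws -cards_draws -cardsDS.
  apply/subset_leq_card/subsetP => A; rewrite !inE => /andP[AU AF].
  by rewrite sizeF // eqxx andbT (negbTE AU).
by apply/subsetP => A; rewrite !inE => /andP[].
Qed.

Definition window n (a b : nat) : {set 'I_n} := [set x : 'I_n | a <= x < b].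

Lemma card_window n a b : #|window n a b| = minn b n - a.
Proof.
rewrite cardE -(size_map val) -(size_iota a (minn b n - a)).
apply/perm_size/uniq_perm; first by rewrite map_inj_uniq ?enum_uniq //; exact: val_inj.
  exact: iota_uniq.
move=> m; rewrite mem_iota; apply/mapP/idP => [[x] | m_in].
  by rewrite mem_enum inE => /andP[ax xb] ->; have := ltn_ord x; rewrite /=; lia.
have mn : m < n by lia.
by exists (Ordinal mn); rewrite // mem_enum inE /=; lia.
Qed.

(* The largest t with 4 t < 3 S j. *)
Definition cutoff (S j : nat) : nat := (3 * S * j).-1 %/ 4.

Lemma ltn_cutoff S j l : 4 * l.+1 < 3 * S * j -> l < cutoff S j.
Proof. by rewrite /cutoff; lia. Qed.

Lemma cutoff_sub_le S j : 4 * (cutoff S j - cutoff S 1) <= 3 * S * j.-1 + 3.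
Proof.
rewrite /cutoff; case: j => [|j]; first by rewrite muln0 div0n.
by rewrite mulnSr muln1 /=; lia.
Qed.

Section Avoiding.
Variables (n S k : nat) (F : {set {set 'I_n}}).
Hypothesis sizeF : forall A, A \in F -> #|A| = k.
Hypothesis dense : forall A, A \in F ->
  exists l : 'I_n, 4 * l.+1 < 3 * S * #|[set i in A | i <= l]|.

Let U := window n (cutoff S 1) n.
Let W j := window n (cutoff S 1) (cutoff S j).

Lemma avoiding_cover : F :&: powerset U \subset
  \bigcup_(1 <= j < k.+1) [set A : {set 'I_n} | [&& A \subset U, #|A| == k & j <= #|A :&: W j|]].
Proof.
apply/subsetP => A; rewrite !inE => /andP[AF AU].
have [l] := dense AF; set j := #|_| => dense_l.
have prefix_sub : [set i in A | i <= l] \subset A.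
  by apply/subsetP => i; rewrite inE => /andP[].
have j_gt0 : 0 < j by move: dense_l; rewrite lt0n; apply: contraTneq => ->; rewrite muln0.
have j_le : j <= k by rewrite -(sizeF AF) subset_leq_card.
rewrite (bigD1_seq j) ?mem_index_iota ?iota_uniq //=; last by rewrite j_gt0 ltnS.
rewrite !inE AU sizeF // eqxx /=; apply/orP; left.
apply/subset_leq_card/subsetP => i; rewrite !inE => /andP[iA il].
rewrite iA /=; have := subsetP AU i iA; rewrite inE => /andP[-> _] /=.
exact: leq_ltn_trans il (ltn_cutoff dense_l).
Qed.

Lemma card_avoiding_le : #|F :&: powerset U| <=
  \sum_(1 <= j < k.+1) 'C(#|W j|, j) * 'C(n - cutoff S 1 - j, k - j).
Proof.
apply: leq_trans (subset_leq_card avoiding_cover) _.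
apply: leq_trans (card_bigcup_le _ _ _) _.
have cardU : #|U| = n - cutoff S 1 by rewrite card_window minnn.
apply: leq_sum => j _; rewrite -cardU; apply: cards_draws_hit_le.
by apply/subsetP => x; rewrite !inE => /andP[-> _] /=.
Qed.

End Avoiding.

Lemma lt_beta_ratio n (F : {set {set 'I_n}}) (t : rat) A : (0 <= t)%R -> A \in F ->
  (t < beta F)%R -> exists l, (t < Defs.ratio A l)%R.
Proof.
move=> t_ge0 AF /lt_le_trans /(_ (bigmin_le_cond _ _ AF)) t_lt.
have [/existsP // | /existsPn all_le] := boolP [exists l, (t < Defs.ratio A l)%R].
by move: t_lt; rewrite ltNge bigmax_le // => l _; rewrite leNgt all_le.
Qed.

Lemma window_sum_lt n s k : 1000 <= s -> 0 < k -> 6 * (s + 1) * k < n ->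
  \sum_(1 <= j < k.+1) 'C(#|window n (cutoff (s + 1) 1) (cutoff (s + 1) j)|, j)
                        * 'C(n - cutoff (s + 1) 1 - j, k - j)
    < 'C(n - cutoff (s + 1) 1, k) - 'C(n - s, k).
Proof.
move=> s_ge k_gt0 n_gt; have p_le : cutoff (s + 1) 1 <= s by rewrite /cutoff; lia.
have -> : n - s = n - cutoff (s + 1) 1 - (s - cutoff (s + 1) 1) by lia.
apply: (@sum_bin_prod_lt (s + 1)) => //.
- by lia.
- by nia.
- by rewrite /cutoff; lia.
- by rewrite /cutoff; lia.
move=> j; rewrite card_window; apply: leq_trans (cutoff_sub_le _ j).
by rewrite leq_mul2l leq_sub2r ?geq_minl ?orbT.
Qed.

Theorem lemma3 (s k n : nat) (F : {set {set 'I_n}}) :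
  (0 < s)%N -> (0 < k)%N -> (2 * 10 ^ 6 < s)%N ->
  (* n = ceil (3 e (s+1) k) *)
  Rlt (Rminus (INR n) (INR 1)) (Rmult (Rmult (Rmult (INR 3) (exp (INR 1))) (INR (s + 1))) (INR k)) /\
  Rle (Rmult (Rmult (Rmult (INR 3) (exp (INR 1))) (INR (s + 1))) (INR k)) (INR n) ->
  (forall A, A \in F -> #|A| = k) ->
  F != set0 ->
  shifted F ->
  ((4%:R / (3 * (s + 1))%:R : rat) < beta F)%O ->
  (#|F| < 'C(n, k) - 'C(n - s, k))%N.
Proof.
move=> _ k_gt0 s_big [_ n_ge] sizeF _ _ beta_gt.
have s_ge : 1000 <= s.
  apply: leq_trans (ltnW s_big); apply: (@leq_trans (10 ^ 6)); last exact: leq_pmull.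
  by rewrite -[1000]/(10 ^ 3) leq_exp2l.
have p_le : cutoff (s + 1) 1 <= s by rewrite /cutoff; lia.
have n_gt := lt_6sk_of_3e_le k_gt0 n_ge.
have dense A : A \in F -> exists l : 'I_n, 4 * l.+1 < 3 * (s + 1) * #|[set i in A | i <= l]|.
  move=> AF; have [|l] := lt_beta_ratio _ AF beta_gt; first by rewrite divr_ge0.
  rewrite /Defs.ratio ltr_frac_nat //; last by rewrite muln_gt0 addn1.
  by move=> dense_l; exists l; rewrite [X in _ < X]mulnC.
have avoid_le := card_avoiding_le sizeF dense.
have meet_le := card_not_subset_le (window n (cutoff (s + 1) 1) n) sizeF.
rewrite card_ord card_window minnn in meet_le.
have sum_lt := window_sum_lt s_ge k_gt0 n_gt.
have bin_le1 := leq_bin2l k (leq_sub2l n p_le).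
have bin_le2 := leq_bin2l k (leq_subr (cutoff (s + 1) 1) n).
rewrite -(cardsID (powerset (window n (cutoff (s + 1) 1) n)) F).
apply: leq_ltn_trans (leq_add avoid_le meet_le) _.
move: sum_lt bin_le1 bin_le2; set T := \sum_(_ <= _ < _) _; lia.
Qed.
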